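(* Let $d\ge2$, let $a$ be an i.i.d. conductivity function on $\mathbb{Z}^d$, $T>0$, $\xi\in\mathbb{R}^d$ with $|\xi|=1$, and let $G_T$ and $\phi_T$ be the associated Green's function and approximate corrector. Then for every edge $e=[z,z+e_i]$ and every $x\in\mathbb{Z}^d$, \[ \frac{\partial\phi_T(x;a)}{\partial a(e)}=-\big(\nabla_i\phi_T(z;a)+\xi_i\big)\nabla_{z_i}G_T(z,x;a), \] and for all $n\in\mathbb{N}$, \[ \sup_{a(e)}\Big|\frac{\partial}{\partial a(e)}\big[\phi_T(x;a)^{n+1}\big]\Big|\lesssim|\phi_T(x;a)|^n\big(|\nabla_i\phi_T(z;a)|+1\big)|\nabla_{z_i}G_T(z,x;a)|+\big(|\nabla_i\phi_T(z;a)|+1\big)^{n+1}|\nabla_{z_i}G_T(z,x;a)|^{n+1}. \] In addition, \[ \sup_{a(e)}|\nabla_i\phi_T(z;a)|\lesssim|\nabla_i\phi_T(z;a)|+1. \] The multiplicative constant in the second estimate depends on $n$ in addition to $\alpha,\beta,d$.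
   Context: A conductivity function on $\mathbb{Z}^d$ is $a:\mathbb{Z}^d\times\mathbb{Z}^d\to\mathbb{R}^+$ with $a(x,y)=0$ if $|x-y|\ne1$ and $a(x,y)=a(y,x)\in[\alpha,\beta]$ if $|x-y|=1$, $0<\alpha\le\beta$; $a(e)$ denotes its value on the edge $e$; i.i.d. means the edge values are independent identically distributed. With $e_1,\dots,e_d$ the canonical basis: $\nabla u(x)=(u(x+e_i)-u(x))_i$, $\nabla^*u(x)=(u(x)-u(x-e_i))_i$, $\nabla^*\cdot g=\sum_i\nabla^*_ig_i$, $A(x)=\operatorname{diag}(a(x,x+e_1),\dots,a(x,x+e_d))$. The Green's function $G_T(\cdot,y;a)$ is the unique solution in $L^2(\mathbb{Z}^d)$ of $\sum_xT^{-1}G_T(x,y)v(x)+\sum_x\nabla v(x)\cdot A(x)\nabla_xG_T(x,y)=v(y)$ for all $v\in L^2(\mathbb{Z}^d)$; $\nabla_{z_i}G_T(z,x)=G_T(z+e_i,x)-G_T(z,x)$. The approximate corrector $\phi_T$ is the unique stationary random function with $T^{-1}\phi_T-\nabla^*\cdot A(\nabla\phi_T+\xi)=0$ and $\langle\phi_T\rangle=0$. $\sup_{a(e)}$ is the supremum over the value $a(e)\in[\alpha,\beta]$ with all other coefficients fixed. $X\lesssim Y$ means $X\le CY$ with $C$ depending only on $d,\alpha,\beta$ (unless stated otherwise). *)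

From Stdlib Require Import Reals Lra Lia ZArith List.
From Coquelicot Require Import Coquelicot.
Import ListNotations.
Open Scope R_scope.

(* Points of Z^d are lists of integers of length d; coordinate k is nth k x 0. *)
Definition pt := list Z.
Definition lattice (d : nat) (x : pt) : Prop := length x = d.

Fixpoint addto (x : pt) (i : nat) (c : Z) : pt :=
  match x, i with
  | [], _ => []
  | h :: t, O => (h + c)%Z :: t
  | h :: t, S i' => h :: addto t i' c
  end.
Definition shift (x : pt) (i : nat) : pt := addto x i 1%Z.
Definition unshift (x : pt) (i : nat) : pt := addto x i (-1)%Z.

Definition sumd (d : nat) (f : nat -> R) : R :=
  fold_right (fun i acc => f i + acc) 0 (seq 0 d).

Definition dist2 (d : nat) (x y : pt) : Z :=
  fold_right (fun k acc => ((nth k x 0%Z - nth k y 0%Z) ^ 2 + acc)%Z) 0%Z (seq 0 d).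

Definition Cond := pt -> pt -> R.
Definition conductivity (d : nat) (alpha beta : R) (a : Cond) : Prop :=
  forall x y, lattice d x -> lattice d y ->
    (dist2 d x y <> 1%Z -> a x y = 0) /\
    (dist2 d x y = 1%Z -> a x y = a y x /\ alpha <= a x y <= beta).

Definition elliptic (d : nat) (a : Cond) : Prop :=
  exists alpha beta, 0 < alpha <= beta /\ conductivity d alpha beta a.

(* the conductivity obtained from a by setting a(e) := s on e = [z, z+e_i] *)
Definition upd (a : Cond) (z : pt) (i : nat) (s : R) : Cond :=
  fun x y =>
    if list_eq_dec Z.eq_dec x z then
      (if list_eq_dec Z.eq_dec y (shift z i) then s else a x y)
    else if list_eq_dec Z.eq_dec x (shift z i) then
      (if list_eq_dec Z.eq_dec y z then s else a x y)
    else a x y.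

Definition grad (u : pt -> R) (x : pt) (i : nat) : R := u (shift x i) - u x.

Definition unit_vec (d : nat) (xi : nat -> R) : Prop := sumd d (fun i => xi i ^ 2) = 1.

Definition zrange (N : nat) : list Z :=
  map (fun k => (Z.of_nat k - Z.of_nat N)%Z) (seq 0 (2 * N + 1)).
Fixpoint box (d N : nat) : list pt :=
  match d with
  | O => [[]]
  | S d' => flat_map (fun j => map (cons j) (box d' N)) (zrange N)
  end.
Definition boxsum (d N : nat) (f : pt -> R) : R :=
  fold_right (fun x acc => f x + acc) 0 (box d N).

Definition l2 (d : nat) (v : pt -> R) : Prop :=
  exists M, forall N, boxsum d N (fun x => v x ^ 2) <= M.

(* G is the Green's function G_T(.,.;a): for every y, G(.,y) is in L^2(Z^d) and
   sum_x T^-1 G(x,y) v(x) + sum_x nabla v(x) . A(x) nabla_x G(x,y) = v(y)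
   for all v in L^2(Z^d) (the sums over Z^d are taken as limits over boxes). *)
Definition green (d : nat) (T : R) (a : Cond) (G : pt -> pt -> R) : Prop :=
  forall y, lattice d y ->
    l2 d (fun x => G x y) /\
    forall v, l2 d v ->
      is_lim_seq
        (fun N => boxsum d N (fun x =>
            / T * G x y * v x
            + sumd d (fun i => grad v x i * a x (shift x i) * grad (fun w => G w y) x i)))
        (Finite (v y)).

(* phi is the approximate corrector phi_T(.;a): the bounded solution on Z^d of
   T^-1 phi - nabla^* . A (nabla phi + xi) = 0. *)
Definition corrector (d : nat) (T : R) (xi : nat -> R) (a : Cond) (phi : pt -> R) : Prop :=
  (exists M, forall x, lattice d x -> Rabs (phi x) <= M) /\
  forall x, lattice d x ->
    / T * phi x
    - sumd d (fun i =>
        a x (shift x i) * (grad phi x i + xi i)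
        - a (unshift x i) x * (grad phi (unshift x i) i + xi i)) = 0.

(* Changing the single coefficient [a(e)], [e = [z, z+e_i]], from [a(e)] to [t] is a rank-one
   perturbation of the operator: the difference of the two correctors solves the unperturbed
   equation with a dipole source on [e].  By uniqueness of bounded solutions (a maximum
   principle, thanks to the mass term [1/T]) this gives
     [phi_t(x) - phi(x) = -(t - a(e)) (nabla_i phi_t(z) + xi_i) nabla_(z_i) G(z, x)],
   and differencing at [z]
     [(nabla_i phi_t(z) + xi_i) (1 + (t - a(e)) g) = nabla_i phi(z) + xi_i]
   with [g = nabla_(z_i) nabla_(z_i) G(z, z)].  The energy identity for [G] gives
   [0 <= a(e) g <= 1], so [1 + (t - a(e)) g >= alpha/beta] for [t] in [[alpha, beta]].
   Hence [phi_t(x)] is an explicit rational function of [t], which yields the derivative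
   formula, and the perturbed gradients of [phi] and [G] are at most [beta/alpha] times the
   unperturbed ones, which yields both estimates. *)

From Stdlib Require Import Reals List Lra Lia ZArith FunctionalExtensionality.
From Coquelicot Require Import Coquelicot.
Open Scope R_scope.

Lemma addto_length (x : pt) j c : length (addto x j c) = length x.
Proof. revert j; induction x; intros [|j]; simpl; auto. Qed.

Lemma addto_addto (x : pt) j c c' : addto (addto x j c) j c' = addto x j (c + c').
Proof. revert j; induction x; intros [|j]; simpl; f_equal; auto; lia. Qed.

Lemma addto_0 (x : pt) j : addto x j 0 = x.
Proof. revert j; induction x; intros [|j]; simpl; f_equal; auto; lia. Qed.

Lemma nth_shift (x : pt) j k : (j < length x)%nat ->
  nth k (shift x j) 0%Z = (nth k x 0 + if Nat.eqb k j then 1 else 0)%Z.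
Proof.
  unfold shift; revert j k; induction x as [|h t IH]; intros j k Hj; simpl in *; [lia|].
  destruct j as [|j], k as [|k]; simpl; try lia.
  apply IH; lia.
Qed.

Lemma shift_unshift (x : pt) j : shift (unshift x j) j = x.
Proof. unfold shift, unshift. rewrite addto_addto. apply addto_0. Qed.

Lemma unshift_shift (x : pt) j : unshift (shift x j) j = x.
Proof. unfold shift, unshift. rewrite addto_addto. apply addto_0. Qed.

Lemma lattice_shift d (x : pt) j : lattice d x -> lattice d (shift x j).
Proof. unfold lattice, shift; rewrite addto_length; auto. Qed.

Lemma lattice_unshift d (x : pt) j : lattice d x -> lattice d (unshift x j).
Proof. unfold lattice, unshift; rewrite addto_length; auto. Qed.

Lemma shift_neq d z i : lattice d z -> (i < d)%nat -> shift z i <> z.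
Proof.
  intros Hz Hi E; apply (f_equal (fun x => nth i x 0%Z)) in E.
  rewrite nth_shift, Nat.eqb_refl in E by (unfold lattice in Hz; lia); lia.
Qed.

Section Neighbours.

Variables (d : nat) (z : pt) (i j : nat).
Hypotheses (Hz : lattice d z) (Hi : (i < d)%nat) (Hj : (j < d)%nat).

Lemma shift_inj_dir : shift z j = shift z i -> j = i.
Proof.
  intros E; apply (f_equal (fun x => nth j x 0%Z)) in E.
  rewrite !nth_shift, Nat.eqb_refl in E by (unfold lattice in Hz; lia).
  destruct (Nat.eqb_spec j i); lia.
Qed.

Lemma shift_shift_neq : shift (shift z i) j <> z.
Proof.
  intros E; apply (f_equal (fun x => nth j x 0%Z)) in E.
  pose proof (lattice_shift d z i Hz) as Hzi.
  rewrite !nth_shift, Nat.eqb_refl in E by (unfold lattice in *; lia).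
  destruct (Nat.eqb j i); lia.
Qed.

End Neighbours.

Lemma fold_seq_indicator (f : nat -> Z) j s n :
  (forall k, f k = if Nat.eqb k j then 1 else 0)%Z ->
  (s <= j < s + n)%nat -> fold_right (fun k acc => f k + acc)%Z 0%Z (seq s n) = 1%Z.
Proof.
  intros Hf; revert s; induction n as [|n IH]; intros s Hs; [lia|].
  simpl; rewrite Hf; destruct (Nat.eqb_spec s j) as [<-|Hsj].
  - assert (Hrest : forall m t, (s < t)%nat ->
              fold_right (fun k acc => f k + acc)%Z 0%Z (seq t m) = 0%Z).
    { induction m as [|m IHm]; intros t Ht; simpl; auto.
      rewrite Hf, IHm by lia; destruct (Nat.eqb_spec t s); lia. }
    rewrite Hrest by lia; lia.
  - rewrite IH; lia.
Qed.

Lemma dist2_shift d x j : lattice d x -> (j < d)%nat ->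
  dist2 d x (shift x j) = 1%Z /\ dist2 d (shift x j) x = 1%Z.
Proof.
  intros Hx Hj; unfold dist2; split; apply (fold_seq_indicator _ j); try lia;
    intro k; rewrite nth_shift by (unfold lattice in Hx; lia); destruct (Nat.eqb k j); lia.
Qed.

Section Conductivity.

Variables (d : nat) (alpha beta : R) (a : Cond).
Hypothesis Ha : conductivity d alpha beta a.

Lemma cond_edge x j : lattice d x -> (j < d)%nat ->
  alpha <= a x (shift x j) <= beta /\ a (shift x j) x = a x (shift x j).
Proof.
  intros Hx Hj.
  destruct (Ha x (shift x j) Hx (lattice_shift _ _ _ Hx)) as [_ H].
  destruct (H (proj1 (dist2_shift d x j Hx Hj))); auto.
Qed.

Lemma cond_edge_back x j : lattice d x -> (j < d)%nat -> alpha <= a (unshift x j) x <= beta.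
Proof.
  intros Hx Hj.
  destruct (cond_edge (unshift x j) j) as [H _]; auto using lattice_unshift.
  rewrite shift_unshift in H; exact H.
Qed.

End Conductivity.

Definition dirac (p : pt) : pt -> R := fun w => if list_eq_dec Z.eq_dec w p then 1 else 0.

Lemma dirac_shift p w j : dirac p (shift w j) = dirac (unshift p j) w.
Proof.
  unfold dirac.
  destruct (list_eq_dec Z.eq_dec (shift w j) p) as [E|E];
  destruct (list_eq_dec Z.eq_dec w (unshift p j)) as [E'|E']; auto; exfalso.
  - apply E'; rewrite <- E, unshift_shift; auto.
  - apply E; rewrite E', shift_unshift; auto.
Qed.

Lemma dirac_unshift p w j : dirac p (unshift w j) = dirac (shift p j) w.
Proof.
  unfold dirac.
  destruct (list_eq_dec Z.eq_dec (unshift w j) p) as [E|E];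
  destruct (list_eq_dec Z.eq_dec w (shift p j)) as [E'|E']; auto; exfalso.
  - apply E'; rewrite <- E, shift_unshift; auto.
  - apply E; rewrite E', unshift_shift; auto.
Qed.

Lemma upd_edge a z i t : upd a z i t z (shift z i) = t.
Proof.
  unfold upd; destruct (list_eq_dec Z.eq_dec z z); [|congruence].
  destruct (list_eq_dec Z.eq_dec (shift z i) (shift z i)); congruence.
Qed.

Lemma upd_upd a z i s t : upd (upd a z i s) z i t = upd a z i t.
Proof.
  extensionality x; extensionality y; unfold upd.
  repeat destruct (list_eq_dec Z.eq_dec _ _); subst; congruence.
Qed.

Section Update.

Variables (d : nat) (a : Cond) (z : pt) (i : nat).
Hypotheses (Hz : lattice d z) (Hi : (i < d)%nat).

Lemma conductivity_upd alpha beta t : conductivity d alpha beta a ->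
  conductivity d (Rmin alpha t) (Rmax beta t) (upd a z i t).
Proof.
  intros Ha x y Hx Hy.
  destruct (dist2_shift d z i Hz Hi) as [D1 D2].
  pose proof (shift_neq d z i Hz Hi).
  destruct (Ha x y Hx Hy) as [H1 H2].
  pose proof (Rmin_r alpha t); pose proof (Rmax_r beta t).
  pose proof (Rmin_l alpha t); pose proof (Rmax_l beta t).
  split; intro Hd; unfold upd;
    repeat destruct (list_eq_dec Z.eq_dec _ _); subst; try congruence; try tauto;
    destruct (H2 Hd); split; auto; lra.
Qed.

Lemma upd_forward t x j : (j < d)%nat ->
  upd a z i t x (shift x j)
  = a x (shift x j) + if Nat.eq_dec j i then (t - a z (shift z i)) * dirac z x else 0.
Proof.
  intros Hj.
  pose proof (shift_neq d z i Hz Hi); pose proof (shift_shift_neq d z i j Hz Hi Hj).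
  pose proof (shift_inj_dir d z i j Hz Hi Hj).
  unfold upd, dirac; destruct (Nat.eq_dec j i); subst;
    repeat destruct (list_eq_dec Z.eq_dec _ _); subst; try congruence; try ring.
  all: exfalso; auto.
Qed.

Lemma upd_backward t x j : (j < d)%nat ->
  upd a z i t (unshift x j) x
  = a (unshift x j) x + if Nat.eq_dec j i then (t - a z (shift z i)) * dirac (shift z i) x else 0.
Proof.
  intros Hj; pose proof (upd_forward t (unshift x j) j Hj) as H.
  rewrite shift_unshift, dirac_unshift in H; rewrite H.
  destruct (Nat.eq_dec j i); subst; reflexivity.
Qed.

End Update.

Definition lsum {A : Type} (l : list A) (f : A -> R) : R :=
  fold_right (fun x acc => f x + acc) 0 l.

Section ListSums.

Context {A : Type}.
Implicit Types (l : list A) (f g : A -> R).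

Lemma lsum_ext_in l f g : (forall x, In x l -> f x = g x) -> lsum l f = lsum l g.
Proof.
  induction l as [|x l IH]; intros H; simpl; auto.
  rewrite (H x), (IH (fun y Hy => H y (or_intror Hy))); simpl; auto.
Qed.

Lemma lsum_plus l f g : lsum l (fun x => f x + g x) = lsum l f + lsum l g.
Proof. induction l; simpl; lra. Qed.

Lemma lsum_minus l f g : lsum l (fun x => f x - g x) = lsum l f - lsum l g.
Proof. induction l; simpl; lra. Qed.

Lemma lsum_scal l c f : lsum l (fun x => c * f x) = c * lsum l f.
Proof. induction l; simpl; lra. Qed.

Lemma lsum_scal_r l c f : lsum l (fun x => f x * c) = lsum l f * c.
Proof. induction l; simpl; lra. Qed.

Lemma lsum_const l c : lsum l (fun _ => c) = INR (length l) * c.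
Proof.
  induction l as [|x l IH]; [simpl; ring|].
  unfold lsum in *; simpl fold_right; simpl length; rewrite S_INR, IH; ring.
Qed.

Lemma lsum_le l f g : (forall x, In x l -> f x <= g x) -> lsum l f <= lsum l g.
Proof.
  induction l as [|x l IH]; intros H; simpl; [lra|].
  pose proof (H x (or_introl eq_refl)); pose proof (IH (fun y Hy => H y (or_intror Hy))); lra.
Qed.

Lemma lsum_nonneg l f : (forall x, In x l -> 0 <= f x) -> 0 <= lsum l f.
Proof.
  intros H; replace 0 with (lsum l (fun _ => 0)) by (rewrite lsum_const; ring).
  apply lsum_le; auto.
Qed.

Lemma lsum_ge_term l f p : (forall x, In x l -> 0 <= f x) -> In p l -> f p <= lsum l f.
Proof.
  induction l as [|x l IH]; intros H Hp; simpl in *; [tauto|].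
  pose proof (lsum_nonneg l f (fun y Hy => H y (or_intror Hy))).
  pose proof (H x (or_introl eq_refl)).
  destruct Hp as [<-|Hp]; [lra|].
  pose proof (IH (fun y Hy => H y (or_intror Hy)) Hp); lra.
Qed.

Lemma lsum_abs l f : Rabs (lsum l f) <= lsum l (fun x => Rabs (f x)).
Proof.
  induction l; simpl; [rewrite Rabs_R0; lra|].
  eapply Rle_trans; [apply Rabs_triang|lra].
Qed.

Lemma lsum_pick (dec : forall x y : A, {x = y} + {x <> y}) l p f :
  NoDup l -> In p l -> lsum l (fun x => if dec x p then f x else 0) = f p.
Proof.
  induction l as [|x l IH]; intros Hn Hp; simpl in *; [tauto|].
  inversion Hn as [|? ? Hx Hl]; subst.
  destruct (dec x p) as [<-|Hxp].
  - rewrite (lsum_ext_in _ _ (fun _ => 0)), lsum_const; [ring|].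
    intros y Hy; destruct (dec y x); congruence.
  - destruct Hp as [|Hp]; [congruence|]; rewrite IH; auto; ring.
Qed.

End ListSums.

Lemma lsum_swap {A B : Type} (l : list A) (m : list B) (F : A -> B -> R) :
  lsum l (fun x => lsum m (F x)) = lsum m (fun y => lsum l (fun x => F x y)).
Proof.
  induction l as [|x l IH]; simpl.
  - rewrite lsum_const; ring.
  - rewrite IH, <- lsum_plus; reflexivity.
Qed.

Lemma lsum_dirac l p f : NoDup l -> In p l -> lsum l (fun w => dirac p w * f w) = f p.
Proof.
  intros Hn Hp; rewrite <- (lsum_pick (list_eq_dec Z.eq_dec) l p f Hn Hp).
  apply lsum_ext_in; intros w _; unfold dirac; destruct (list_eq_dec Z.eq_dec w p); ring.
Qed.

Lemma sumd_pick d i f : (i < d)%nat ->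
  sumd d (fun k => if Nat.eq_dec k i then f k else 0) = f i.
Proof. intros; apply (lsum_pick Nat.eq_dec); [apply seq_NoDup|apply in_seq; lia]. Qed.

Lemma sumd_lsum d f : sumd d f = lsum (seq 0 d) f.
Proof. reflexivity. Qed.

Lemma boxsum_lsum d N f : boxsum d N f = lsum (box d N) f.
Proof. reflexivity. Qed.

Lemma sumd_ext d f g : (forall k, (k < d)%nat -> f k = g k) -> sumd d f = sumd d g.
Proof. intros H; apply lsum_ext_in; intros k Hk; apply in_seq in Hk; apply H; lia. Qed.

Lemma sumd_le d f g : (forall k, (k < d)%nat -> f k <= g k) -> sumd d f <= sumd d g.
Proof. intros H; apply lsum_le; intros k Hk; apply in_seq in Hk; apply H; lia. Qed.

Lemma sumd_const d c : sumd d (fun _ => c) = INR d * c.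
Proof. rewrite sumd_lsum, lsum_const, length_seq; reflexivity. Qed.

Lemma sumd_ge_term d f i : (forall k, (k < d)%nat -> 0 <= f k) -> (i < d)%nat -> f i <= sumd d f.
Proof.
  intros H Hi; apply lsum_ge_term; [|apply in_seq; lia].
  intros k Hk; apply in_seq in Hk; apply H; lia.
Qed.

Lemma box_lattice d N x : In x (box d N) -> lattice d x.
Proof.
  unfold lattice; revert x; induction d; intros x H; simpl in H.
  - destruct H as [<-|[]]; auto.
  - apply in_flat_map in H as (c & _ & Hc); apply in_map_iff in Hc as (y & <- & Hy).
    simpl; rewrite (IHd y Hy); auto.
Qed.

Lemma in_box d N x : lattice d x -> List.Forall (fun c => (Z.abs c <= Z.of_nat N)%Z) x ->
  In x (box d N).
Proof.
  unfold lattice; revert x; induction d; intros [|c x] Hl HF; simpl in *; try lia; auto.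
  inversion HF; subst; apply in_flat_map; exists c; split.
  - apply in_map_iff; exists (Z.to_nat (c + Z.of_nat N)); split; [lia|apply in_seq; lia].
  - apply in_map, IHd; auto.
Qed.

Lemma box_NoDup d N : NoDup (box d N).
Proof.
  induction d; simpl; [repeat constructor; simpl; tauto|].
  assert (Hz : NoDup (zrange N)).
  { apply NoDup_map_NoDup_ForallPairs; [|apply seq_NoDup]; intros ? ? _ _ ?; lia. }
  induction Hz as [|c l Hc Hl IH]; simpl; [constructor|].
  apply NoDup_app; auto.
  - apply NoDup_map_NoDup_ForallPairs; auto; intros ? ? _ _ E; inversion E; auto.
  - intros x Hx Hx'; apply in_map_iff in Hx as (y & <- & _).
    apply in_flat_map in Hx' as (c' & Hc' & Hy); apply in_map_iff in Hy as (y' & E & _).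
    inversion E; subst; tauto.
Qed.

Definition norm1 (x : pt) : Z := fold_right (fun c m => (Z.abs c + m)%Z) 0%Z x.

Lemma Forall_le_norm1 x : List.Forall (fun c => (Z.abs c <= norm1 x)%Z) x.
Proof.
  induction x as [|c x IH]; simpl; constructor.
  - assert (0 <= norm1 x)%Z by (clear IH; induction x; simpl; lia); lia.
  - eapply Forall_impl; [|exact IH]; simpl; intros; lia.
Qed.

Lemma Forall_addto (x : pt) j c M : List.Forall (fun c' => (Z.abs c' <= M)%Z) x ->
  List.Forall (fun c' => (Z.abs c' <= M + Z.abs c)%Z) (addto x j c).
Proof.
  intros HF; revert j; induction HF as [|c' x Hc' Hx IH]; intros [|k]; simpl;
    constructor; auto; try lia.
  eapply Forall_impl; [|exact Hx]; simpl; intros; lia.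
Qed.

Lemma box_eventually_contains d x : lattice d x ->
  forall N, (Z.to_nat (norm1 x) + 1 <= N)%nat ->
  In x (box d N) /\ forall j, In (unshift x j) (box d N).
Proof.
  intros Hx N HN; split; [|intros j]; apply in_box; auto using lattice_unshift.
  - eapply Forall_impl; [|apply Forall_le_norm1]; simpl; intros; lia.
  - eapply Forall_impl; [|apply Forall_addto, Forall_le_norm1]; simpl; intros; lia.
Qed.

(** * The divergence-form operator and Green's function *)

Lemma is_lim_seq_eventually_ge (u : nat -> R) (l c : R) N0 :
  is_lim_seq u l -> (forall N, (N0 <= N)%nat -> c <= u N) -> c <= l.
Proof.
  intros Hl Hc.
  exact (is_lim_seq_le_loc (fun _ => c) u c l (ex_intro _ N0 Hc) (is_lim_seq_const c) Hl).
Qed.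

Lemma is_lim_seq_eventually_eq (u : nat -> R) (l c : R) N0 :
  is_lim_seq u l -> (forall N, (N0 <= N)%nat -> u N = c) -> c = l.
Proof.
  intros Hl Hc.
  apply is_lim_seq_ext_loc with (v := fun _ => c) in Hl; [|exists N0; exact Hc].
  apply is_lim_seq_unique in Hl; rewrite Lim_seq_const in Hl; congruence.
Qed.

Definition bounded (d : nat) (u : pt -> R) : Prop :=
  exists M, forall x, lattice d x -> Rabs (u x) <= M.

Lemma l2_bounded d v : l2 d v -> bounded d v.
Proof.
  intros [M HM]; exists (1 + M); intros x Hx.
  destruct (box_eventually_contains d x Hx _ (le_n _)) as [Hin _].
  pose proof (lsum_ge_term _ (fun w => v w ^ 2) x (fun w _ => pow2_ge_0 (v w)) Hin).
  pose proof (HM (Z.to_nat (norm1 x) + 1)%nat) as HMx; rewrite boxsum_lsum in HMx.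
  destruct (Rcase_abs (v x)); [rewrite Rabs_left|rewrite Rabs_right]; simpl in *; nra.
Qed.

Lemma l2_dirac d p : l2 d (dirac p).
Proof.
  exists 1; intros N; rewrite boxsum_lsum.
  destruct (in_dec (list_eq_dec Z.eq_dec) p (box d N)) as [Hp|Hp].
  - rewrite (lsum_ext_in _ _ (fun w => dirac p w * dirac p w)) by (intros; simpl; ring).
    rewrite lsum_dirac by auto using box_NoDup; unfold dirac.
    destruct (list_eq_dec Z.eq_dec p p); lra.
  - rewrite (lsum_ext_in _ _ (fun _ => 0)), lsum_const; [lra|].
    intros w Hw; unfold dirac; destruct (list_eq_dec Z.eq_dec w p); subst; [tauto|ring].
Qed.

Lemma l2_minus d u v : l2 d u -> l2 d v -> l2 d (fun w => u w - v w).
Proof.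
  intros [M1 H1] [M2 H2]; exists (2 * M1 + 2 * M2); intros N.
  specialize (H1 N); specialize (H2 N); rewrite boxsum_lsum in *.
  eapply Rle_trans; [apply (lsum_le _ _ (fun w => 2 * u w ^ 2 + 2 * v w ^ 2))|].
  - intros w _; pose proof (pow2_ge_0 (u w + v w)); simpl in *; nra.
  - rewrite lsum_plus, !lsum_scal; lra.
Qed.

(* [div_flux d b xi u x] is [(nabla^* . B (nabla u + xi))(x)] with [B = diag(b(x, x+e_j))]. *)
Definition div_flux (d : nat) (b : Cond) (xi : nat -> R) (u : pt -> R) (x : pt) : R :=
  sumd d (fun j => b x (shift x j) * (grad u x j + xi j)
                   - b (unshift x j) x * (grad u (unshift x j) j + xi j)).

Lemma lsum_box_grad_dirac d N x j F : lattice d x -> (Z.to_nat (norm1 x) + 1 <= N)%nat ->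
  lsum (box d N) (fun w => grad (dirac x) w j * F w) = F (unshift x j) - F x.
Proof.
  intros Hx HN; destruct (box_eventually_contains d x Hx N HN) as [Hin Hin'].
  rewrite (lsum_ext_in _ _ (fun w => dirac (unshift x j) w * F w - dirac x w * F w)).
  - rewrite lsum_minus, !lsum_dirac; auto using box_NoDup.
  - intros w _; unfold grad; rewrite dirac_shift; ring.
Qed.

Lemma weak_form_dirac d T b u x N : lattice d x -> (Z.to_nat (norm1 x) + 1 <= N)%nat ->
  boxsum d N (fun w => / T * u w * dirac x w
                       + sumd d (fun j => grad (dirac x) w j * b w (shift w j) * grad u w j))
  = / T * u x - div_flux d b (fun _ => 0) u x.
Proof.
  intros Hx HN; destruct (box_eventually_contains d x Hx N HN) as [Hin _].
  rewrite boxsum_lsum, lsum_plus.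
  rewrite (lsum_ext_in _ (fun w => / T * u w * dirac x w) (fun w => dirac x w * (/ T * u w)))
    by (intros; ring).
  rewrite lsum_dirac by auto using box_NoDup.
  rewrite (lsum_ext_in _ _ (fun w => lsum (seq 0 d)
             (fun j => grad (dirac x) w j * b w (shift w j) * grad u w j))) by reflexivity.
  rewrite lsum_swap.
  unfold div_flux; rewrite sumd_lsum.
  rewrite (lsum_ext_in _ _ (fun j => b (unshift x j) x * (grad u (unshift x j) j + 0)
                                    - b x (shift x j) * (grad u x j + 0))).
  - rewrite !lsum_minus; ring.
  - intros j _.
    rewrite (lsum_ext_in _ _ (fun w => grad (dirac x) w j * (b w (shift w j) * grad u w j)))
      by (intros; ring).
    rewrite lsum_box_grad_dirac, shift_unshift by auto; ring.
Qed.

Lemma dirac_sym p q : dirac p q = dirac q p.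
Proof.
  unfold dirac; destruct (list_eq_dec Z.eq_dec q p), (list_eq_dec Z.eq_dec p q); congruence.
Qed.

Section Green.

Variables (d : nat) (T : R) (b : Cond) (G : pt -> pt -> R).
Hypothesis HG : green d T b G.

Lemma green_pointwise x y : lattice d x -> lattice d y ->
  / T * G x y - div_flux d b (fun _ => 0) (fun w => G w y) x = dirac y x.
Proof.
  intros Hx Hy; destruct (HG y Hy) as [_ Hw].
  specialize (Hw (dirac x) (l2_dirac d x)); rewrite dirac_sym.
  apply (is_lim_seq_eventually_eq _ _ _ (Z.to_nat (norm1 x) + 1) Hw); intros N HN.
  exact (weak_form_dirac d T b (fun w => G w y) x N Hx HN).
Qed.

Lemma green_sym x y : lattice d x -> lattice d y -> G x y = G y x.
Proof.
  intros Hx Hy.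
  destruct (HG y Hy) as [Hly Hwy]; destruct (HG x Hx) as [Hlx Hwx].
  specialize (Hwy _ Hlx); specialize (Hwx _ Hly).
  apply is_lim_seq_unique in Hwy, Hwx.
  enough (Finite (G x y) = Finite (G y x)) by congruence.
  rewrite <- Hwy, <- Hwx; apply Lim_seq_ext; intros N; rewrite !boxsum_lsum.
  apply lsum_ext_in; intros w _; f_equal; [ring|apply sumd_ext; intros; ring].
Qed.

Lemma green_bounded y : lattice d y -> bounded d (fun x => G x y).
Proof. intros Hy; exact (l2_bounded d _ (proj1 (HG y Hy))). Qed.

End Green.

(** * Uniqueness of bounded solutions *)

Section MaximumPrinciple.

Variables (d : nat) (alpha beta T : R) (b : Cond) (w : pt -> R).
Hypotheses (HT : 0 < T) (Hab : 0 < alpha <= beta) (Hb : conductivity d alpha beta b).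
Hypothesis Hw : forall x, lattice d x -> / T * w x - div_flux d b (fun _ => 0) w x = 0.

Lemma div_flux_zero_expand x : div_flux d b (fun _ => 0) w x
  = sumd d (fun j => b x (shift x j) * w (shift x j) + b (unshift x j) x * w (unshift x j))
    - sumd d (fun j => b x (shift x j) + b (unshift x j) x) * w x.
Proof.
  unfold div_flux; rewrite !sumd_lsum, <- lsum_scal_r, <- lsum_minus.
  apply lsum_ext_in; intros j _; unfold grad; rewrite shift_unshift; ring.
Qed.

(* One step of the maximum principle: the mass term [/ T] contracts the sup norm. *)
Lemma max_principle_step x K : lattice d x -> (forall y, lattice d y -> Rabs (w y) <= K) ->
  Rabs (w x) <= INR d * (2 * beta) / (/ T + INR d * (2 * beta)) * K.
Proof.
  intros Hx HK; pose proof (Hw x Hx) as Hwx; rewrite div_flux_zero_expand in Hwx.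
  set (S := sumd d (fun j => b x (shift x j) + b (unshift x j) x)).
  set (Y := sumd d (fun j => b x (shift x j) * w (shift x j)
                             + b (unshift x j) x * w (unshift x j))).
  set (B := INR d * (2 * beta)).
  assert (Hbj : forall j, (j < d)%nat ->
             0 <= b x (shift x j) <= beta /\ 0 <= b (unshift x j) x <= beta).
  { intros j Hj; pose proof (proj1 (cond_edge d alpha beta b Hb x j Hx Hj)).
    pose proof (cond_edge_back d alpha beta b Hb x j Hx Hj); lra. }
  assert (HS : 0 <= S <= B).
  { unfold B; rewrite <- (Rmult_0_r (INR d)), <- !sumd_const.
    split; apply sumd_le; intros j Hj; specialize (Hbj j Hj); lra. }
  assert (HY : Rabs Y <= S * K).
  { unfold Y, S; rewrite !sumd_lsum, <- lsum_scal_r.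
    eapply Rle_trans; [apply lsum_abs|]; apply lsum_le; intros j Hj; apply in_seq in Hj.
    destruct (Hbj j ltac:(lia)).
    pose proof (HK _ (lattice_shift _ _ j Hx)); pose proof (HK _ (lattice_unshift _ _ j Hx)).
    eapply Rle_trans; [apply Rabs_triang|].
    rewrite !Rabs_mult, (Rabs_pos_eq (b x _)), (Rabs_pos_eq (b _ x)) by lra; nra. }
  pose proof (Rinv_0_lt_compat T HT); pose proof (HK x Hx); pose proof (Rabs_pos (w x)).
  assert (Hwx' : (/ T + S) * Rabs (w x) <= S * K).
  { assert (E : (/ T + S) * w x = Y) by (unfold S, Y; lra).
    rewrite <- (Rabs_pos_eq (/ T + S)), <- Rabs_mult, E by lra; exact HY. }
  assert ((B - S) * Rabs (w x) <= (B - S) * K) by (apply Rmult_le_compat_l; lra).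
  apply (Rmult_le_reg_l (/ T + B)); [lra|].
  replace ((/ T + B) * (B / (/ T + B) * K)) with (B * K) by (field; nra); nra.
Qed.

Lemma bounded_solution_zero : bounded d w ->
  forall x, lattice d x -> w x = 0.
Proof.
  intros [M HM].
  set (B := INR d * (2 * beta)); set (k := B / (/ T + B)).
  assert (HB : 0 <= B) by (unfold B; pose proof (pos_INR d); nra).
  pose proof (Rinv_0_lt_compat T HT).
  assert (Hk : 0 <= k < 1).
  { unfold k; split; [apply Rdiv_le_0_compat; lra|].
    apply (Rmult_lt_reg_r (/ T + B)); [lra|].
    unfold Rdiv; rewrite Rmult_assoc, Rinv_l, Rmult_1_r by lra; lra. }
  assert (Hn : forall n x, lattice d x -> Rabs (w x) <= k ^ n * M).
  { induction n as [|n IH]; intros x Hx; [simpl; rewrite Rmult_1_l; auto|].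
    eapply Rle_trans; [apply (max_principle_step x (k ^ n * M) Hx IH)|].
    fold B k; simpl; lra. }
  assert (Hlim : is_lim_seq (fun n => k ^ n * M) 0).
  { replace (Finite 0) with (Rbar_mult 0 M) by (simpl; f_equal; ring).
    apply is_lim_seq_scal_r, is_lim_seq_geom; rewrite Rabs_pos_eq; lra. }
  intros x Hx; apply Rabs_eq_0, Rle_antisym; [|apply Rabs_pos].
  exact (is_lim_seq_eventually_ge _ _ _ 0 Hlim (fun n _ => Hn n x Hx)).
Qed.

End MaximumPrinciple.

(** * Perturbation of a single coefficient *)

Lemma bounded_lincomb d u v c : bounded d u -> bounded d v ->
  bounded d (fun w => u w + c * v w).
Proof.
  intros [Mu Hu] [Mv Hv]; exists (Mu + Rabs c * Mv); intros x Hx.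
  eapply Rle_trans; [apply Rabs_triang|]; rewrite Rabs_mult.
  pose proof (Hu x Hx); pose proof (Hv x Hx); pose proof (Rabs_pos c); nra.
Qed.

Lemma bounded_minus d u v : bounded d u -> bounded d v -> bounded d (fun w => u w - v w).
Proof.
  intros Hu Hv; destruct (bounded_lincomb d u v (-1) Hu Hv) as [M HM].
  exists M; intros x Hx; replace (u x - v x) with (u x + -1 * v x) by ring; auto.
Qed.

Lemma dirac_mul p x (f : pt -> R) : dirac p x * f x = dirac p x * f p.
Proof. unfold dirac; destruct (list_eq_dec Z.eq_dec x p); subst; ring. Qed.

Lemma div_flux_upd d a z i t xi u x : lattice d z -> (i < d)%nat ->
  div_flux d (upd a z i t) xi u x - div_flux d a xi u x
  = (t - a z (shift z i)) * (grad u z i + xi i) * (dirac z x - dirac (shift z i) x).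
Proof.
  intros Hz Hi; unfold div_flux; rewrite !sumd_lsum, <- lsum_minus.
  set (c := (t - a z (shift z i)) * (grad u z i + xi i) * (dirac z x - dirac (shift z i) x)).
  rewrite (lsum_ext_in _ _ (fun j => if Nat.eq_dec j i then c else 0)).
  - exact (sumd_pick d i (fun _ => c) Hi).
  - intros j Hj; apply in_seq in Hj.
    rewrite (upd_forward d), (upd_backward d) by (auto; lia).
    destruct (Nat.eq_dec j i) as [->|]; [|ring].
    pose proof (dirac_mul z x (fun w => grad u w i + xi i)) as Ez.
    pose proof (dirac_mul (shift z i) x (fun w => grad u (unshift w i) i + xi i)) as Es.
    cbv beta in Ez, Es; rewrite unshift_shift in Es.
    transitivity ((t - a z (shift z i)) * (dirac z x * (grad u x i + xi i)
                    - dirac (shift z i) x * (grad u (unshift x i) i + xi i))); [ring|].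
    rewrite Ez, Es; unfold c; ring.
Qed.

Lemma div_flux_lincomb d b xi u v c g1 g2 x :
  div_flux d b (fun _ => 0) (fun w => u w - v w + c * (g1 w - g2 w)) x
  = div_flux d b xi u x - div_flux d b xi v x
    + c * (div_flux d b (fun _ => 0) g1 x - div_flux d b (fun _ => 0) g2 x).
Proof.
  unfold div_flux; rewrite !sumd_lsum, <- !lsum_minus, <- lsum_scal, <- lsum_plus.
  apply lsum_ext_in; intros; unfold grad; ring.
Qed.

Definition mixed_grad_green (G : pt -> pt -> R) (z : pt) (i : nat) : R :=
  grad (fun w => G w (shift z i)) z i - grad (fun w => G w z) z i.

Section Perturbation.

Variables (d : nat) (alpha beta T t : R) (a : Cond) (G : pt -> pt -> R).
Variables (z : pt) (i : nat) (xi : nat -> R) (u v F : pt -> R).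
Hypotheses (HT : 0 < T) (Hab : 0 < alpha <= beta) (Ha : conductivity d alpha beta a).
Hypotheses (Hz : lattice d z) (Hi : (i < d)%nat) (HG : green d T a G).
Hypotheses (Hub : bounded d u) (Hvb : bounded d v).
Hypothesis Hu : forall x, lattice d x -> / T * u x - div_flux d (upd a z i t) xi u x = F x.
Hypothesis Hv : forall x, lattice d x -> / T * v x - div_flux d a xi v x = F x.

(* [u - v] solves the unperturbed equation with the dipole source [c (delta_z - delta_(z+e_i))],
   whose bounded solution is [c (G(., z) - G(., z+e_i))]. *)
Lemma perturbation_identity : forall x, lattice d x ->
  u x - v x = - ((t - a z (shift z i)) * (grad u z i + xi i)) * grad (fun w => G w x) z i.
Proof.
  set (c := (t - a z (shift z i)) * (grad u z i + xi i)).
  pose proof (lattice_shift d z i Hz) as Hzi.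
  set (h := fun w => u w - v w + c * (G w (shift z i) - G w z)).
  assert (Hh : forall x, lattice d x -> h x = 0).
  { apply (bounded_solution_zero d alpha beta T a h HT Hab Ha).
    - intros y Hy; unfold h; rewrite (div_flux_lincomb d a xi).
      pose proof (green_pointwise d T a G HG y (shift z i) Hy Hzi) as G1.
      pose proof (green_pointwise d T a G HG y z Hy Hz) as G2.
      pose proof (div_flux_upd d a z i t xi u y Hz Hi) as K; fold c in K.
      specialize (Hu y Hy); specialize (Hv y Hy).
      transitivity ((/ T * u y - div_flux d (upd a z i t) xi u y)
        + (div_flux d (upd a z i t) xi u y - div_flux d a xi u y)
        - (/ T * v y - div_flux d a xi v y)
        + c * ((/ T * G y (shift z i) - div_flux d a (fun _ => 0) (fun w => G w (shift z i)) y)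
               - (/ T * G y z - div_flux d a (fun _ => 0) (fun w => G w z) y))); [ring|].
      rewrite Hu, Hv, K, G1, G2; ring.
    - apply bounded_lincomb; apply bounded_minus; auto;
        apply green_bounded with (T := T) (b := a); auto. }
  intros x Hx; specialize (Hh x Hx); unfold h in Hh.
  rewrite (green_sym d T a G HG x (shift z i)), (green_sym d T a G HG x z) in Hh by auto.
  unfold grad; fold c; lra.
Qed.

Lemma perturbation_identity_grad :
  (grad u z i + xi i) * (1 + (t - a z (shift z i)) * mixed_grad_green G z i) = grad v z i + xi i.
Proof.
  pose proof (perturbation_identity (shift z i) (lattice_shift d z i Hz)).
  pose proof (perturbation_identity z Hz).
  unfold mixed_grad_green, grad in *; lra.
Qed.

End Perturbation.

(** * The energy bound on the mixed second difference of G *)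

Definition energy (d : nat) (T : R) (b : Cond) (U : pt -> R) (w : pt) : R :=
  / T * (U w * U w) + sumd d (fun j => b w (shift w j) * (grad U w j * grad U w j)).

Section Energy.

Variables (d : nat) (alpha beta T : R) (a : Cond) (G : pt -> pt -> R) (z : pt) (i : nat).
Hypotheses (HT : 0 < T) (Hab : 0 < alpha <= beta) (Ha : conductivity d alpha beta a).
Hypotheses (HG : green d T a G) (Hz : lattice d z) (Hi : (i < d)%nat).

Let U : pt -> R := fun w => G w (shift z i) - G w z.

(* Test the equations of [G(., z+e_i)] and [G(., z)] against their difference [U]. *)
Lemma green_dipole_energy :
  is_lim_seq (fun N => boxsum d N (energy d T a U)) (mixed_grad_green G z i).
Proof.
  destruct (HG _ (lattice_shift d z i Hz)) as [L1 W1]; destruct (HG _ Hz) as [L2 W2].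
  assert (LU : l2 d U) by (apply l2_minus; auto).
  pose proof (is_lim_seq_minus' _ _ _ _ (W1 U LU) (W2 U LU)) as W.
  replace (U (shift z i) - U z) with (mixed_grad_green G z i) in W
    by (unfold U, mixed_grad_green, grad; ring).
  refine (is_lim_seq_ext _ _ _ _ W); intros N; cbv beta.
  rewrite !boxsum_lsum, <- lsum_minus; apply lsum_ext_in; intros w _.
  unfold energy; rewrite !sumd_lsum.
  transitivity (/ T * (G w (shift z i) * U w - G w z * U w)
    + (lsum (seq 0 d) (fun j => grad U w j * a w (shift w j) * grad (fun w => G w (shift z i)) w j)
       - lsum (seq 0 d) (fun j => grad U w j * a w (shift w j) * grad (fun w => G w z) w j)));
    [ring|].
  rewrite <- lsum_minus; f_equal; [unfold U; ring|].
  apply lsum_ext_in; intros; unfold U, grad; ring.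
Qed.

Lemma energy_nonneg w : lattice d w -> 0 <= energy d T a U w.
Proof.
  intros Hw; unfold energy.
  assert (0 <= / T * (U w * U w)) by (pose proof (Rinv_0_lt_compat T HT); nra).
  enough (0 <= sumd d (fun j => a w (shift w j) * (grad U w j * grad U w j))) by lra.
  rewrite <- (Rmult_0_r (INR d)), <- sumd_const; apply sumd_le; intros j Hj.
  pose proof (proj1 (cond_edge d alpha beta a Ha w j Hw Hj)); nra.
Qed.

Lemma mixed_grad_green_bounds :
  0 <= mixed_grad_green G z i /\ a z (shift z i) * mixed_grad_green G z i <= 1.
Proof.
  set (g := mixed_grad_green G z i).
  assert (Hg : grad U z i = g) by (unfold U, g, mixed_grad_green, grad; ring).
  pose proof (proj1 (cond_edge d alpha beta a Ha z i Hz Hi)).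
  assert (Hle : a z (shift z i) * (g * g) <= g).
  { apply (is_lim_seq_eventually_ge _ _ _ (Z.to_nat (norm1 z) + 1) green_dipole_energy).
    intros N HN; destruct (box_eventually_contains d z Hz N HN) as [Hin _].
    rewrite boxsum_lsum.
    eapply Rle_trans; [|apply lsum_ge_term; eauto using energy_nonneg, box_lattice].
    unfold energy; rewrite <- Hg.
    pose proof (Rinv_0_lt_compat T HT); assert (0 <= / T * (U z * U z)) by nra.
    enough (a z (shift z i) * (grad U z i * grad U z i)
            <= sumd d (fun j => a z (shift z j) * (grad U z j * grad U z j))) by lra.
    apply (sumd_ge_term d (fun j => a z (shift z j) * (grad U z j * grad U z j))); auto.
    intros k Hk; pose proof (proj1 (cond_edge d alpha beta a Ha z k Hz Hk)); nra. }
  split; [nra|].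
  destruct (Rle_lt_dec (a z (shift z i) * g) 1); auto; nra.
Qed.

End Energy.

(** * Sensitivity of the corrector *)

Lemma perturbation_factor_lower_bound alpha beta ae s g : 0 < alpha <= beta ->
  alpha <= ae <= beta -> alpha <= s <= beta -> 0 <= g -> ae * g <= 1 ->
  alpha <= beta * (1 + (s - ae) * g).
Proof.
  intros Hab Hae Hs Hg Haeg; destruct (Rle_lt_dec ae s).
  - assert (0 <= (s - ae) * g) by (apply Rmult_le_pos; lra); nra.
  - assert (ae * (1 + (s - ae) * g) >= s) by nra; nra.
Qed.

Lemma abs_le_ratio alpha beta D X P : 0 < alpha <= beta -> alpha <= beta * D -> X * D = P ->
  Rabs X <= beta / alpha * Rabs P.
Proof.
  intros Hab HD <-; rewrite Rabs_mult, (Rabs_pos_eq D) by nra.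
  apply (Rmult_le_reg_l alpha); [lra|].
  replace (alpha * (beta / alpha * (Rabs X * D))) with (Rabs X * (beta * D)) by (field; lra).
  pose proof (Rabs_pos X); nra.
Qed.

Lemma unit_vec_coord_le d xi i : unit_vec d xi -> (i < d)%nat -> Rabs (xi i) <= 1.
Proof.
  intros Hxi Hi.
  pose proof (sumd_ge_term d (fun k => xi k ^ 2) i (fun k _ => pow2_ge_0 (xi k)) Hi) as H.
  unfold unit_vec in Hxi; rewrite Hxi in H; apply Rabs_le; simpl in H; nra.
Qed.

Lemma pow_sum_le n u v : 0 <= u -> 0 <= v -> (u + v) ^ n <= 2 ^ n * (u ^ n + v ^ n).
Proof.
  intros Hu Hv; pose proof (pow_le u n Hu); pose proof (pow_le v n Hv).
  destruct (Rle_lt_dec u v);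
    [apply Rle_trans with ((2 * v) ^ n)|apply Rle_trans with ((2 * u) ^ n)];
    try (apply pow_incr; lra); rewrite Rpow_mult_distr;
    pose proof (pow_le 2 n ltac:(lra)); nra.
Qed.

Lemma power_derivative_estimate n r K A p q X Y Ph :
  0 <= r -> 0 <= K -> 0 <= A -> 0 <= p -> 0 <= q ->
  0 <= X <= r * p -> 0 <= Y <= r * q -> 0 <= Ph <= A + K * p * q ->
  INR (n + 1) * (X * Y) * Ph ^ n
  <= INR (n + 1) * r ^ 2 * 2 ^ n * (1 + K ^ n) * (A ^ n * p * q + p ^ (n + 1) * q ^ (n + 1)).
Proof.
  intros Hr HK HA Hp Hq HX HY HPh.
  set (E := A ^ n * p * q); set (F := p ^ (n + 1) * q ^ (n + 1)).
  assert (HE : 0 <= E) by (unfold E; repeat apply Rmult_le_pos; auto using pow_le).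
  assert (HF : 0 <= F) by (unfold F; apply Rmult_le_pos; auto using pow_le).
  assert (HKn : 0 <= K ^ n) by (apply pow_le; lra).
  assert (H2n : 0 <= 2 ^ n) by (apply pow_le; lra).
  assert (HPhn : Ph ^ n <= 2 ^ n * (A ^ n + K ^ n * (p * q) ^ n)).
  { rewrite <- Rpow_mult_distr; eapply Rle_trans; [apply pow_incr; exact HPh|].
    replace (K * (p * q)) with (K * p * q) by ring.
    apply pow_sum_le; [lra|repeat apply Rmult_le_pos; lra]. }
  assert (HXY : X * Y <= r ^ 2 * (p * q)) by (simpl; nra).
  assert (Hpq : p * q * (A ^ n + K ^ n * (p * q) ^ n) = E + K ^ n * F).
  { unfold E, F; rewrite !pow_add, Rpow_mult_distr; simpl; ring. }
  assert (Hmain : X * Y * Ph ^ n <= r ^ 2 * 2 ^ n * (E + K ^ n * F)).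
  { rewrite <- Hpq.
    apply Rle_trans with (r ^ 2 * (p * q) * (2 ^ n * (A ^ n + K ^ n * (p * q) ^ n)));
      [|right; ring].
    apply Rmult_le_compat; auto; [nra|apply pow_le; lra]. }
  assert (E + K ^ n * F <= (1 + K ^ n) * (E + F)) by nra.
  pose proof (pos_INR (n + 1)); pose proof (pow_le r 2 Hr).
  replace (INR (n + 1) * (X * Y) * Ph ^ n) with (INR (n + 1) * (X * Y * Ph ^ n)) by ring.
  replace (INR (n + 1) * r ^ 2 * 2 ^ n * (1 + K ^ n) * (E + F))
    with (INR (n + 1) * (r ^ 2 * 2 ^ n * ((1 + K ^ n) * (E + F)))) by ring.
  apply Rmult_le_compat_l; auto.
  eapply Rle_trans; [exact Hmain|]; apply Rmult_le_compat_l; nra.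
Qed.

Lemma elliptic_upd d alpha beta a z i t : 0 < alpha <= beta -> conductivity d alpha beta a ->
  lattice d z -> (i < d)%nat -> 0 < t -> elliptic d (upd a z i t).
Proof.
  intros Hab Ha Hz Hi Ht; exists (Rmin alpha t), (Rmax beta t); split.
  - split; [apply Rmin_pos; lra|].
    eapply Rle_trans; [apply Rmin_l|]; eapply Rle_trans; [|apply Rmax_l]; lra.
  - apply conductivity_upd; auto.
Qed.

Lemma conductivity_upd_within d alpha beta a z i s : conductivity d alpha beta a ->
  lattice d z -> (i < d)%nat -> alpha <= s <= beta -> conductivity d alpha beta (upd a z i s).
Proof.
  intros Ha Hz Hi Hs; pose proof (conductivity_upd d a z i Hz Hi alpha beta s Ha) as H.
  rewrite Rmin_left, Rmax_left in H by lra; exact H.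
Qed.

Lemma conductivity_elliptic d alpha beta a : 0 < alpha <= beta ->
  conductivity d alpha beta a -> elliptic d a.
Proof. intros; exists alpha, beta; auto. Qed.

Section Corrector.

Variables (d : nat) (alpha beta : R).
Variables (PHI : R -> (nat -> R) -> Cond -> pt -> R) (G : R -> Cond -> pt -> pt -> R).
Hypothesis Hab : 0 < alpha <= beta.
Hypothesis HPHI : forall T xi a, 0 < T -> unit_vec d xi -> elliptic d a ->
  corrector d T xi a (PHI T xi a).
Hypothesis HGreen : forall T a, 0 < T -> elliptic d a -> green d T a (G T a).

Section Edge.

Variables (T : R) (xi : nat -> R) (a : Cond) (z : pt) (i : nat).
Hypotheses (HT : 0 < T) (Hxi : unit_vec d xi) (Ha : conductivity d alpha beta a).
Hypotheses (Hz : lattice d z) (Hi : (i < d)%nat).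

Let Ea : elliptic d a := conductivity_elliptic d alpha beta a Hab Ha.

Lemma corrector_perturbation t : 0 < t -> forall x, lattice d x ->
  PHI T xi (upd a z i t) x - PHI T xi a x
  = - ((t - a z (shift z i)) * (grad (PHI T xi (upd a z i t)) z i + xi i))
    * grad (fun w => G T a w x) z i.
Proof.
  intros Ht; pose proof (elliptic_upd d alpha beta a z i t Hab Ha Hz Hi Ht) as Et.
  destruct (HPHI T xi a HT Hxi Ea), (HPHI T xi _ HT Hxi Et).
  pose proof (HGreen T a HT Ea).
  apply (perturbation_identity d alpha beta T t a (G T a) z i xi _ _ (fun _ => 0)); auto.
Qed.

Lemma corrector_grad_perturbation t : 0 < t ->
  (grad (PHI T xi (upd a z i t)) z i + xi i)
    * (1 + (t - a z (shift z i)) * mixed_grad_green (G T a) z i)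
  = grad (PHI T xi a) z i + xi i.
Proof.
  intros Ht; pose proof (elliptic_upd d alpha beta a z i t Hab Ha Hz Hi Ht) as Et.
  destruct (HPHI T xi a HT Hxi Ea), (HPHI T xi _ HT Hxi Et).
  pose proof (HGreen T a HT Ea).
  apply (perturbation_identity_grad d alpha beta T t a (G T a) z i xi _ _ (fun _ => 0)); auto.
Qed.

Lemma green_grad_perturbation t y : 0 < t -> lattice d y ->
  grad (fun w => G T (upd a z i t) w y) z i
    * (1 + (t - a z (shift z i)) * mixed_grad_green (G T a) z i)
  = grad (fun w => G T a w y) z i.
Proof.
  intros Ht Hy; pose proof (elliptic_upd d alpha beta a z i t Hab Ha Hz Hi Ht) as Et.
  pose proof (HGreen T a HT Ea) as Ga; pose proof (HGreen T _ HT Et) as Gt.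
  pose proof (perturbation_identity_grad d alpha beta T t a (G T a) z i (fun _ => 0)
    (fun w => G T (upd a z i t) w y) (fun w => G T a w y) (dirac y)
    HT Hab Ha Hz Hi Ga (green_bounded d T _ _ Gt y Hy) (green_bounded d T _ _ Ga y Hy)) as P.
  rewrite !Rplus_0_r in P; apply P; intros x Hx; apply green_pointwise; auto.
Qed.

Lemma perturbation_factor_pos t : 0 < t ->
  0 < 1 + (t - a z (shift z i)) * mixed_grad_green (G T a) z i.
Proof.
  intros Ht.
  destruct (mixed_grad_green_bounds d alpha beta T a (G T a) z i HT Hab Ha
              (HGreen T a HT Ea) Hz Hi) as [[Hg|<-] Hag]; [nra|lra].
Qed.

Lemma corrector_upd_formula t x : 0 < t -> lattice d x ->
  PHI T xi (upd a z i t) x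
  = PHI T xi a x - (t - a z (shift z i)) * (grad (PHI T xi a) z i + xi i)
                   * grad (fun w => G T a w x) z i
                   / (1 + (t - a z (shift z i)) * mixed_grad_green (G T a) z i).
Proof.
  intros Ht Hx; pose proof (perturbation_factor_pos t Ht).
  rewrite <- (corrector_grad_perturbation t Ht).
  pose proof (corrector_perturbation t Ht x Hx); field_simplify; lra.
Qed.

Lemma corrector_derivative x : lattice d x ->
  is_derive (fun s => PHI T xi (upd a z i s) x) (a z (shift z i))
    (- (grad (PHI T xi a) z i + xi i) * grad (fun w => G T a w x) z i).
Proof.
  intros Hx; set (ae := a z (shift z i)).
  assert (Hae : 0 < ae) by (pose proof (cond_edge d alpha beta a Ha z i Hz Hi); unfold ae; lra).
  apply is_derive_ext_loc with (f := fun t => PHI T xi a x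
    - (t - ae) * (grad (PHI T xi a) z i + xi i) * grad (fun w => G T a w x) z i
      / (1 + (t - ae) * mixed_grad_green (G T a) z i)).
  - exists (mkposreal ae Hae); intros t Ht; apply Rabs_lt_between' in Ht; simpl in Ht.
    rewrite corrector_upd_formula by (auto; lra); reflexivity.
  - auto_derive; replace (ae + - ae) with 0 by ring; [lra|field].
Qed.

Lemma perturbation_factor_within s : alpha <= s <= beta ->
  alpha <= beta * (1 + (s - a z (shift z i)) * mixed_grad_green (G T a) z i).
Proof.
  intros Hs.
  destruct (mixed_grad_green_bounds d alpha beta T a (G T a) z i HT Hab Ha
              (HGreen T a HT Ea) Hz Hi).
  apply perturbation_factor_lower_bound; auto.
  exact (proj1 (cond_edge d alpha beta a Ha z i Hz Hi)).
Qed.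

Lemma corrector_grad_upd_bound s : alpha <= s <= beta ->
  Rabs (grad (PHI T xi (upd a z i s)) z i + xi i)
  <= beta / alpha * (Rabs (grad (PHI T xi a) z i) + 1).
Proof.
  intros Hs; eapply Rle_trans.
  - eapply (abs_le_ratio alpha beta _ _ _ Hab (perturbation_factor_within s Hs)).
    apply corrector_grad_perturbation; lra.
  - pose proof (unit_vec_coord_le d xi i Hxi Hi).
    pose proof (Rabs_triang (grad (PHI T xi a) z i) (xi i)).
    apply Rmult_le_compat_l; [apply Rlt_le, Rdiv_lt_0_compat|]; lra.
Qed.

Lemma green_grad_upd_bound s y : alpha <= s <= beta -> lattice d y ->
  Rabs (grad (fun w => G T (upd a z i s) w y) z i)
  <= beta / alpha * Rabs (grad (fun w => G T a w y) z i).
Proof.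
  intros Hs Hy; eapply (abs_le_ratio alpha beta _ _ _ Hab (perturbation_factor_within s Hs)).
  apply green_grad_perturbation; auto; lra.
Qed.

Lemma corrector_upd_bound s x : alpha <= s <= beta -> lattice d x ->
  Rabs (PHI T xi (upd a z i s) x)
  <= Rabs (PHI T xi a x) + (beta - alpha) * Rabs (grad (PHI T xi (upd a z i s)) z i + xi i)
                           * Rabs (grad (fun w => G T a w x) z i).
Proof.
  intros Hs Hx; pose proof (corrector_perturbation s ltac:(lra) x Hx) as E.
  replace (PHI T xi (upd a z i s) x)
    with (PHI T xi a x + (PHI T xi (upd a z i s) x - PHI T xi a x)) by ring; rewrite E.
  eapply Rle_trans; [apply Rabs_triang|]; apply Rplus_le_compat_l.
  rewrite Rabs_mult, Rabs_Ropp, Rabs_mult.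
  pose proof (proj1 (cond_edge d alpha beta a Ha z i Hz Hi)).
  assert (Rabs (s - a z (shift z i)) <= beta - alpha) by (apply Rabs_le; lra).
  apply Rmult_le_compat_r; [apply Rabs_pos|]; apply Rmult_le_compat_r; [apply Rabs_pos|lra].
Qed.

End Edge.

Definition power_constant (alpha beta : R) (n : nat) : R :=
  INR (n + 1) * (beta / alpha) ^ 2 * 2 ^ n * (1 + ((beta - alpha) * (beta / alpha)) ^ n).

Lemma power_constant_pos n : 0 < power_constant alpha beta n.
Proof.
  unfold power_constant.
  assert (0 < beta / alpha) by (apply Rdiv_lt_0_compat; lra).
  assert (0 <= (beta - alpha) * (beta / alpha)) by (apply Rmult_le_pos; lra).
  pose proof (lt_0_INR (n + 1) ltac:(lia)); pose proof (pow_lt 2 n ltac:(lra)).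
  pose proof (pow_le ((beta - alpha) * (beta / alpha)) n ltac:(lra)).
  pose proof (pow_lt (beta / alpha) 2 ltac:(lra)).
  apply Rmult_lt_0_compat; [apply Rmult_lt_0_compat; [apply Rmult_lt_0_compat|]|]; lra.
Qed.

Lemma derivative_power_bound n T xi a z i x s :
  0 < T -> unit_vec d xi -> conductivity d alpha beta a ->
  lattice d z -> (i < d)%nat -> lattice d x -> alpha <= s <= beta ->
  Rabs (Derive (fun t => (PHI T xi (upd a z i t) x) ^ (n + 1)) s)
  <= power_constant alpha beta n
     * (Rabs (PHI T xi a x) ^ n * (Rabs (grad (PHI T xi a) z i) + 1)
          * Rabs (grad (fun w => G T a w x) z i)
        + (Rabs (grad (PHI T xi a) z i) + 1) ^ (n + 1)
          * Rabs (grad (fun w => G T a w x) z i) ^ (n + 1)).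
Proof.
  intros HT Hxi Ha Hz Hi Hx Hs.
  pose proof (conductivity_upd_within d alpha beta a z i s Ha Hz Hi Hs) as Hs'.
  pose proof (corrector_derivative T xi (upd a z i s) z i HT Hxi Hs' Hz Hi x Hx) as D.
  (* The slope at [s] is the slope of the perturbation of [upd a z i s] at its own edge value. *)
  rewrite upd_edge in D.
  apply (is_derive_ext _ (fun t => PHI T xi (upd a z i t) x)) in D;
    [|intros t; rewrite upd_upd; auto].
  apply is_derive_pow with (n := (n + 1)%nat), is_derive_unique in D; rewrite D.
  replace (Init.Nat.pred (n + 1)) with n by lia.
  rewrite !Rabs_mult, Rabs_Ropp, <- RPow_abs, (Rabs_pos_eq (INR (n + 1))) by apply pos_INR.
  pose proof (corrector_grad_upd_bound T xi a z i HT Hxi Ha Hz Hi s Hs) as BX.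
  pose proof (green_grad_upd_bound T a z i HT Ha Hz Hi s x Hs Hx) as BY.
  pose proof (corrector_upd_bound T xi a z i HT Hxi Ha Hz Hi s x Hs Hx) as BPhi.
  assert (Hr : 0 < beta / alpha) by (apply Rdiv_lt_0_compat; lra).
  pose proof (Rabs_pos (grad (PHI T xi a) z i)).
  unfold power_constant; apply power_derivative_estimate;
    try apply Rabs_pos; try (split; [apply Rabs_pos|]).
  - lra.
  - apply Rmult_le_pos; lra.
  - lra.
  - exact BX.
  - exact BY.
  - eapply Rle_trans; [exact BPhi|]; apply Rplus_le_compat_l.
    rewrite (Rmult_assoc (beta - alpha) (beta / alpha)).
    apply Rmult_le_compat_r; [apply Rabs_pos|]; apply Rmult_le_compat_l; lra.
Qed.

Lemma grad_corrector_sup_bound T xi a z i s :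
  0 < T -> unit_vec d xi -> conductivity d alpha beta a -> lattice d z -> (i < d)%nat ->
  alpha <= s <= beta ->
  Rabs (grad (PHI T xi (upd a z i s)) z i)
  <= (beta / alpha + 1) * (Rabs (grad (PHI T xi a) z i) + 1).
Proof.
  intros HT Hxi Ha Hz Hi Hs.
  pose proof (corrector_grad_upd_bound T xi a z i HT Hxi Ha Hz Hi s Hs).
  pose proof (unit_vec_coord_le d xi i Hxi Hi).
  pose proof (Rabs_triang (grad (PHI T xi (upd a z i s)) z i + xi i) (- xi i)).
  rewrite Rabs_Ropp in *; replace (grad (PHI T xi (upd a z i s)) z i + xi i + - xi i)
    with (grad (PHI T xi (upd a z i s)) z i) in * by ring.
  pose proof (Rabs_pos (grad (PHI T xi a) z i)); lra.
Qed.

End Corrector.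

Theorem lemma2p4 :
  forall (d : nat), (2 <= d)%nat ->
  forall alpha beta : R, 0 < alpha <= beta ->
  forall (PHI : R -> (nat -> R) -> Cond -> pt -> R)
         (G : R -> Cond -> pt -> pt -> R),
  (forall T xi a, 0 < T -> unit_vec d xi -> elliptic d a ->
      corrector d T xi a (PHI T xi a)) ->
  (forall T a, 0 < T -> elliptic d a -> green d T a (G T a)) ->
  (forall T xi a z i x,
      0 < T -> unit_vec d xi -> conductivity d alpha beta a ->
      lattice d z -> (i < d)%nat -> lattice d x ->
      is_derive (fun s => PHI T xi (upd a z i s) x) (a z (shift z i))
        (- (grad (PHI T xi a) z i + xi i) * grad (fun w => G T a w x) z i))
  /\
  (forall n : nat, exists C, 0 < C /\
    forall T xi a z i x,
      0 < T -> unit_vec d xi -> conductivity d alpha beta a ->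
      lattice d z -> (i < d)%nat -> lattice d x ->
      forall s, alpha <= s <= beta ->
        Rabs (Derive (fun t => (PHI T xi (upd a z i t) x) ^ (n + 1)) s)
        <= C * (Rabs (PHI T xi a x) ^ n * (Rabs (grad (PHI T xi a) z i) + 1)
                  * Rabs (grad (fun w => G T a w x) z i)
                + (Rabs (grad (PHI T xi a) z i) + 1) ^ (n + 1)
                  * Rabs (grad (fun w => G T a w x) z i) ^ (n + 1)))
  /\
  (exists C, 0 < C /\
    forall T xi a z i,
      0 < T -> unit_vec d xi -> conductivity d alpha beta a ->
      lattice d z -> (i < d)%nat ->
      forall s, alpha <= s <= beta ->
        Rabs (grad (PHI T xi (upd a z i s)) z i)
        <= C * (Rabs (grad (PHI T xi a) z i) + 1)).
Proof.
  (* The argument works in every dimension. *)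
  intros d _ alpha beta Hab PHI G HPHI HGreen; split; [|split].
  - intros; eapply corrector_derivative; eauto.
  - intros n; exists (power_constant alpha beta n); split.
    + apply power_constant_pos; auto.
    + intros; eapply derivative_power_bound; eauto.
  - exists (beta / alpha + 1); split.
    + assert (0 < beta / alpha) by (apply Rdiv_lt_0_compat; lra); lra.
    + intros; eapply grad_corrector_sup_bound; eauto.
Qed.
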